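(* Let $\beta\ge 4$ be a constant, let $n$ be sufficiently large, and let $\alpha=\beta/\log n$. Throw $n$ balls independently and uniformly at random into $m=\alpha n=\beta n/\log n$ bins, and let $X_1$ be the number of bins containing exactly one ball. Then $X_1\ge n^{1-1/\beta}/(4\log n)$ with high probability, i.e., with probability at least $1-n^{-c}$ for an arbitrary fixed constant $c$ (for $n$ sufficiently large).
   Context: All logarithms are natural. The number of bins $m=\beta n/\log n$ is assumed to be an integer. *)

From HB Require Import structures.
From mathcomp Require Import all_boot all_order all_algebra.
From mathcomp Require Import all_classical all_reals all_analysis.
Set Implicit Arguments. Unset Strict Implicit. Unset Printing Implicit Defensive.
Import Order.TTheory GRing.Theory Num.Theory.
Local Open Scope ring_scope.

(* An outcome of throwing n balls into m bins: f i = bin of ball i.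
   Uniform independent throws = uniform distribution on {ffun 'I_n -> 'I_m}. *)

Definition X1 (n m : nat) (f : {ffun 'I_n -> 'I_m}) : nat :=
  #|[set j : 'I_m | #|[set i : 'I_n | f i == j]| == 1%N]|.

Definition prob_X1_ge (R : realType) (n m : nat) (t : R) : R :=
  (#|[set f : {ffun 'I_n -> 'I_m} | t <= (X1 f)%:R]|)%:R / (m ^ n)%:R.

(* Let A f be the number of balls that are alone in their bin, so that A f <= X1 f.
   Over the m^n equally likely outcomes A has mean n (1 - 1/m)^(n-1) >= n e^(-n/(m-1)),
   which is at least n^(1-1/beta)/4 since n/m = ln n / beta; and moving a single ball
   changes A by at most 2.  McDiarmid's bounded-differences inequality, obtained by
   bounding the exponential moment one ball at a time with e^x <= 1 + x + 2 x^2 for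
   x <= 1/2, gives Pr[A <= E A - s] <= exp (- s^2 / (32 n)).  For s = n^(1-1/beta)/8
   the exponent is at least n^(1-2/beta)/2048 >= sqrt n / 2048, which exceeds c ln n
   as soon as n >= (8192 c)^4. *)

From HB Require Import structures.
From mathcomp Require Import all_boot all_order all_algebra.
From mathcomp Require Import all_classical all_reals all_analysis.
From mathcomp Require Import ring lra.
Set Implicit Arguments. Unset Strict Implicit. Unset Printing Implicit Defensive.
Import Order.TTheory GRing.Theory Num.Theory.
Local Open Scope ring_scope.

Lemma expR_le_quad (R : realType) (x : R) : x <= 1/2 -> expR x <= 1 + x + 2 * x ^+ 2.
Proof.
move=> hx.
have hq : 1 <= (1 - x) * (1 + x + 2 * x ^+ 2).
  have -> : (1 - x) * (1 + x + 2 * x ^+ 2) = 1 + x ^+ 2 * (1 - 2 * x) by ring.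
  by rewrite lerDl mulr_ge0 ?sqr_ge0 //; lra.
have hP : 0 <= 1 + x + 2 * x ^+ 2 by nra.
have h1x : expR x * (1 - x) <= 1.
  rewrite -[X in _ <= X](expRxMexpNx_1 x) ler_wpM2l ?expR_ge0 //.
  by have := expR_ge1Dx (- x); lra.
apply: le_trans (ler_peMr (expR_ge0 x) hq) _.
by rewrite mulrA -[X in _ <= X]mul1r ler_wpM2r.
Qed.

Lemma expR1_le4 (R : realType) : expR 1 <= 4 :> R.
Proof.
have h : expR (1/2) <= 2 :> R by apply: le_trans (expR_le_quad _) _; lra.
rewrite [1](_ : _ = 1/2 + 1/2 :> R); last lra.
by rewrite expRD; have := expR_gt0 (1/2 : R); nra.
Qed.

Lemma expR_le_pow_ratio (R : realType) (x : R) k :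
  1 < x -> expR (- (k%:R / (x - 1))) <= ((x - 1) / x) ^+ k.
Proof.
move=> x1; have x10 : 0 < x - 1 by lra.
have base : expR (- (x - 1)^-1) <= (x - 1) / x.
  rewrite -invf_div expRN lef_pV2 ?posrE ?expR_gt0 ?divr_gt0 //; last lra.
  rewrite (_ : x / (x - 1) = 1 + (x - 1)^-1); first exact: expR_ge1Dx.
  by field; rewrite gt_eqF.
rewrite -mulrN expRM_natl lerXn2r ?nnegrE ?expR_ge0 //.
by rewrite divr_ge0 //; lra.
Qed.

Lemma mul_le_expR_half (R : realType) (a y : R) :
  0 <= a -> a ^+ 4 <= expR y -> a * y <= 4 * expR (y / 2).
Proof.
move=> a0 ay; set u := expR (y / 4).
have u4 : u ^+ 4 = expR y by rewrite /u -expRM_natl; congr expR; lra.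
have u2 : u ^+ 2 = expR (y / 2) by rewrite /u -expRM_natl; congr expR; lra.
have au : a <= u by rewrite -(ler_pXn2r (isT : (0 < 4)%N)) ?nnegrE ?expR_ge0 // u4.
have yu : y <= 4 * u by have := expR_ge1Dx (y / 4); rewrite -/u; lra.
rewrite -u2; apply: le_trans (ler_wpM2l a0 yu) _.
by rewrite mulrCA ler_wpM2l // expr2 ler_wpM2r ?expR_ge0.
Qed.

Lemma ln_ge2 (R : realType) (x : R) : 16 <= x -> 2 <= ln x.
Proof.
move=> x16; rewrite -ler_expR lnK ?posrE; last lra.
rewrite (_ : 2 = 1 + 1 :> R) ?expRD; last lra.
by have := expR1_le4 R; have := expR_gt0 (1 : R); nra.
Qed.

Lemma ln_sqr_lt (R : realType) (x : R) : 1 <= x -> ln x ^+ 2 < 2 * x.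
Proof.
move=> x1; have := expR_ge1Dxn 1 (ln_ge0 x1).
rewrite lnK ?posrE -?[2`!]/2%N; lra.
Qed.

Lemma powR_1BV (R : realType) (beta x : R) :
  0 < x -> x `^ (1 - beta^-1) = x * expR (- (ln x / beta)).
Proof. by move=> x0; rewrite /powR gt_eqF // mulrBl mul1r expRD lnK // [beta^-1 * _]mulrC. Qed.

Lemma expRN1_ge (R : realType) : 1/4 <= expR (-1) :> R.
Proof.
by rewrite expRN div1r lef_pV2 ?posrE ?expR_gt0 ?expR1_le4.
Qed.

Section Averages.
Variable R : realType.

Definition avg (U : finType) (h : U -> R) : R := (\sum_u h u) / #|U|%:R.

Variable U : finType.
Implicit Types h : U -> R.

Lemma ler_avg h1 h2 : (forall u, h1 u <= h2 u) -> avg h1 <= avg h2.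
Proof. by move=> h12; rewrite ler_wpM2r ?invr_ge0 ?ler0n // ler_sum. Qed.

Lemma avgMr h c : avg (fun u => h u * c) = avg h * c.
Proof. by rewrite /avg -mulr_suml mulrAC. Qed.

Lemma avgMl h c : avg (fun u => c * h u) = c * avg h.
Proof. by rewrite mulrC -avgMr; congr avg; apply/funext => u; rewrite mulrC. Qed.

Hypothesis U0 : (0 < #|U|)%N.

Lemma avg_cst c : avg (fun _ : U => c) = c.
Proof. by rewrite /avg sumr_const -[_ *+ _]mulr_natr mulfK // pnatr_eq0 -lt0n. Qed.

Lemma sum_avg h : \sum_u h u = #|U|%:R * avg h.
Proof. by rewrite /avg mulrC divfK // pnatr_eq0 -lt0n. Qed.

Lemma sum_avgB h : \sum_u (avg h - h u) = 0.
Proof. by rewrite sumrB sumr_const -[_ *+ _]mulr_natr /avg divfK ?subrr // pnatr_eq0 -lt0n. Qed.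

Lemma ler_norm_avgB h1 h2 d :
  (forall u, `|h1 u - h2 u| <= d) -> `|avg h1 - avg h2| <= d.
Proof.
move=> hd; have U0R : 0 < #|U|%:R :> R by rewrite ltr0n.
rewrite -mulrBl -sumrB normrM [`|_^-1|]ger0_norm ?invr_ge0 ?ler0n // ler_pdivrMr //.
apply: le_trans (ler_norm_sum _ _ _) (le_trans (ler_sum _ (fun u _ => hd u)) _).
by rewrite sumr_const mulr_natr.
Qed.

Lemma avg_expR_centered_le (G : U -> R) (lam d : R) :
  0 <= lam -> lam * d <= 1/2 -> (forall a b, `|G a - G b| <= d) ->
  avg (fun a => expR (lam * (avg G - G a))) <= expR (2 * lam ^+ 2 * d ^+ 2).
Proof.
move=> lam0 lamd hG.
have devG a : `|lam * (avg G - G a)| <= lam * d.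
  rewrite normrM ger0_norm // ler_wpM2l // -[G a in X in `|_ - X|](avg_cst (G a)).
  exact: ler_norm_avgB.
apply: le_trans (_ : avg (fun a => 1 + lam * (avg G - G a) + 2 * (lam ^+ 2 * d ^+ 2)) <= _).
  apply: ler_avg => a; apply: le_trans (expR_le_quad _) _.
    exact: le_trans (ler_norm _) (le_trans (devG a) lamd).
  rewrite lerD2l ler_wpM2l // -exprMn -real_normK ?num_real //.
  by rewrite lerXn2r ?nnegrE // (le_trans _ (devG a)).
rewrite /avg big_split big_split /= -mulr_sumr sum_avgB mulr0 addr0.
have := avg_cst (1 + 2 * (lam ^+ 2 * d ^+ 2)); rewrite /avg big_split /= => ->.
by rewrite mulrA expR_ge1Dx.
Qed.

End Averages.

Section BoundedDifferences.
Variables (R : realType) (T : finType).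
Hypothesis T0 : (0 < #|T|)%N.

Definition ffun_cons n (a : T) (g : {ffun 'I_n -> T}) : {ffun 'I_n.+1 -> T} :=
  [ffun i => if unlift ord0 i is Some j then g j else a].

Lemma ffun_cons0 n a g : @ffun_cons n a g ord0 = a.
Proof. by rewrite ffunE unlift_none. Qed.

Lemma ffun_consS n a g j : @ffun_cons n a g (lift ord0 j) = g j.
Proof. by rewrite ffunE liftK. Qed.

Lemma sum_ffun_cons n (H : {ffun 'I_n.+1 -> T} -> R) :
  \sum_f H f = \sum_a \sum_(g : {ffun 'I_n -> T}) H (ffun_cons a g).
Proof.
rewrite pair_big /= (reindex (fun p => ffun_cons p.1 p.2)) //=.
exists (fun f => (f ord0, [ffun j => f (lift ord0 j)])) => [[a g] _|f _] /=.
  by rewrite ffun_cons0; congr pair; apply/ffunP => j; rewrite ffunE ffun_consS.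
by apply/ffunP => i; rewrite ffunE; case: unliftP => [j ->|->]; rewrite ?ffunE.
Qed.

Lemma card_ffun_gt0 n : (0 < #|{ffun 'I_n -> T}|)%N.
Proof. by rewrite card_ffun expn_gt0 T0. Qed.

Lemma avg_ffun_cons n (H : {ffun 'I_n.+1 -> T} -> R) :
  avg H = avg (fun a => avg (fun g : {ffun 'I_n -> T} => H (ffun_cons a g))).
Proof.
rewrite /avg sum_ffun_cons -mulr_suml !card_ffun !card_ord expnS natrM.
by field; rewrite !pnatr_eq0 -!lt0n expn_gt0 T0.
Qed.

Definition bounded_differences n (d : R) (F : {ffun 'I_n -> T} -> R) :=
  forall (f g : {ffun 'I_n -> T}) i, (forall k, k != i -> f k = g k) -> `|F f - F g| <= d.

Lemma avg_expR_deviation_le n (d lam : R) (F : {ffun 'I_n -> T} -> R) :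
  0 <= lam -> lam * d <= 1/2 -> bounded_differences d F ->
  avg (fun f => expR (lam * (avg F - F f))) <= expR (2 * n%:R * lam ^+ 2 * d ^+ 2).
Proof.
move=> lam0 lamd; elim: n F => [|n IHn] F hF.
  have avgF f : avg F = F f.
    rewrite -[RHS](avg_cst (card_ffun_gt0 0)); congr avg; apply/funext => g.
    by congr F; apply/ffunP => -[].
  rewrite mulr0 !mul0r expR0 -[X in _ <= X](avg_cst (card_ffun_gt0 0)).
  by apply: ler_avg => f; rewrite (avgF f) subrr mulr0 expR0.
pose G a := avg (fun g => F (ffun_cons a g)).
have hG a b : `|G a - G b| <= d.
  apply: ler_norm_avgB; first exact: card_ffun_gt0.
  move=> g; apply: (hF _ _ ord0) => k; rewrite !ffunE.
  by case: unliftP => [j ->|->]; rewrite ?eqxx.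
set E := expR (2 * n%:R * lam ^+ 2 * d ^+ 2).
have step a : avg (fun g => expR (lam * (avg G - F (ffun_cons a g))))
              <= expR (lam * (avg G - G a)) * E.
  have -> : avg (fun g => expR (lam * (avg G - F (ffun_cons a g)))) =
      expR (lam * (avg G - G a)) * avg (fun g => expR (lam * (G a - F (ffun_cons a g)))).
    by rewrite -avgMl; congr avg; apply/funext => g; rewrite -expRD; congr expR; ring.
  rewrite ler_wpM2l ?expR_ge0 // IHn // => g g' i hi.
  apply: (hF _ _ (lift ord0 i)) => k; rewrite !ffunE.
  by case: unliftP => [j ->|->] //; rewrite (inj_eq lift_inj) => /hi ->.
rewrite avg_ffun_cons [avg F]avg_ffun_cons -/(avg G).
apply: le_trans (ler_avg step) _; rewrite avgMr.
apply: le_trans (ler_wpM2r (expR_ge0 _) (avg_expR_centered_le T0 lam0 lamd hG)) _.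
by rewrite /E -expRD ler_expR -natr1; lra.
Qed.

Lemma card_lower_tail_le n (d s : R) (F : {ffun 'I_n -> T} -> R) :
  (0 < n)%N -> 0 < d -> 0 <= s <= 2 * n%:R * d -> bounded_differences d F ->
  #|[set f | F f <= avg F - s]|%:R
    <= #|{ffun 'I_n -> T}|%:R * expR (- (s ^+ 2 / (8 * n%:R * d ^+ 2))).
Proof.
move=> n0 d0 /andP[s0 s2nd] hF; have n0R : 0 < n%:R :> R by rewrite ltr0n.
(* the lam minimizing 2 n lam^2 d^2 - lam s *)
pose lam := s / (4 * n%:R * d ^+ 2).
have lam0 : 0 <= lam by rewrite divr_ge0 // mulr_ge0 ?sqr_ge0 //; lra.
have lamd : lam * d <= 1/2.
  rewrite /lam mulrAC ler_pdivrMr; first nra.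
  by rewrite !mulr_gt0 ?exprn_gt0.
have chernoff : #|[set f | F f <= avg F - s]|%:R * expR (lam * s)
    <= \sum_f expR (lam * (avg F - F f)).
  rewrite (bigID (fun f => f \in [set f | F f <= avg F - s])) /= -[X in X <= _]addr0 lerD //.
    rewrite -sum1_card natr_sum mulr_suml.
    by apply: ler_sum => f; rewrite inE mul1r ler_expR => /(ler_wpM2l lam0); lra.
  by rewrite sumr_ge0 // => f _; rewrite expR_ge0.
have exponent : 2 * n%:R * lam ^+ 2 * d ^+ 2 - lam * s = - (s ^+ 2 / (8 * n%:R * d ^+ 2)).
  by rewrite /lam; field; rewrite !gt_eqF.
rewrite -exponent expRD expRN mulrA ler_pdivlMr ?expR_gt0 //.
apply: le_trans chernoff _.
by rewrite sum_avg ?card_ffun_gt0 // ler_wpM2l ?ler0n ?avg_expR_deviation_le.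
Qed.

End BoundedDifferences.

Section BallsInBins.
Variables n m : nat.
Implicit Types f g : {ffun 'I_n -> 'I_m}.

Definition alone f (i : 'I_n) := [forall k, (k != i) ==> (f k != f i)].

Definition nalone f := #|[set i | alone f i]|.

Lemma alone_inj f : {in [set i | alone f i] &, injective f}.
Proof.
move=> i j; rewrite !inE => /forallP hi _ fij; apply/eqP; apply: contraT => nij.
by have := hi j; rewrite eq_sym nij fij eqxx.
Qed.

Lemma nalone_le_X1 f : (nalone f <= X1 f)%N.
Proof.
rewrite /nalone -(card_in_imset (@alone_inj f)); apply: subset_leq_card.
apply/fintype.subsetP => _ /imsetP[i + ->]; rewrite inE => /forallP hi.
rewrite inE (_ : [set k | f k == f i] = [set i]) ?cards1 //.
apply/setP => k; rewrite !inE; apply/idP/idP => [|/eqP -> //].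
by apply: contraLR => ki; have := hi k; rewrite ki.
Qed.

Lemma nalone_le_moved f g (i : 'I_n) : (forall k, k != i -> f k = g k) ->
  (nalone f <= nalone g + 2)%N.
Proof.
move=> fg.
set S := [set k | alone f k && (f k == g i)].
have S1 : (#|S| <= 1)%N.
  apply/card_le1_eqP => k l; rewrite !inE => /andP[fk /eqP ek] /andP[fl /eqP el].
  by apply: (@alone_inj f); rewrite ?inE // ek el.
(* A ball alone under f but not under g is the moved ball i, or the ball that was alone
   in the bin g i that i moved into. *)
have sub : [set k | alone f k] \subset [set k | alone g k] :|: [set i] :|: S.
  apply/fintype.subsetP => k; rewrite !inE => fk.
  have [->|ki] := eqVneq k i; first by rewrite orbT.
  case gk: (alone g k) => //=; rewrite fk /=.
  move/negbT: gk => /forallPn[l]; rewrite negb_imply negbK => /andP[lk /eqP gl].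
  have [li|li] := eqVneq l i; first by rewrite fg // -gl li.
  by move: fk => /forallP /(_ l); rewrite lk fg // fg // gl eqxx.
apply: leq_trans (subset_leq_card sub) _.
apply: leq_trans (leq_card_setU _ _) _; rewrite -[2%N]/(1 + 1)%N addnA leq_add //.
by apply: leq_trans (leq_card_setU _ _) _; rewrite cards1.
Qed.

Lemma card_alone_at (i : 'I_n) (j : 'I_m) :
  #|[pred f | alone f i && (f i == j)]| = (m.-1 ^ n.-1)%N.
Proof.
have -> : #|[pred f | alone f i && (f i == j)]| =
    #|family (fun k => if k == i then pred1 j else predC1 j)|.
  apply: eq_card => f; rewrite !inE /=; apply/andP/forallP => [[/forallP fi /eqP <-] k|ff].
    have [->|ki] := eqVneq k i; rewrite !inE //.
    by have := fi k; rewrite ki.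
  have /eqP fij : f i == j by have := ff i; rewrite eqxx.
  split; last by rewrite fij.
  by apply/forallP => k; apply/implyP => ki; have := ff k; rewrite (negbTE ki) fij.
rewrite card_family foldrE big_map big_enum /= (bigD1 i) //= eqxx card1 mul1n.
rewrite (eq_bigr (fun _ => m.-1)) => [|k /negbTE ->]; last by rewrite cardC1 card_ord.
by rewrite prod_nat_const cardC1 card_ord.
Qed.

Lemma sum_nalone : (0 < n)%N -> (\sum_f nalone f = n * (m * m.-1 ^ n.-1))%N.
Proof.
move=> n0.
have split_bins f : nalone f = (\sum_i \sum_j (alone f i && (f i == j) : nat))%N.
  rewrite /nalone -sum1_card big_mkcond /=; apply: eq_bigr => i _.
  rewrite (bigD1 (f i)) //= eqxx andbT big1 ?addn0 ?inE // => j ji.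
  by rewrite eq_sym (negbTE ji) andbF.
rewrite (eq_bigr _ (fun f _ => split_bins f)) exchange_big /=.
rewrite -[n in (n * _)%N]card_ord -sum_nat_const; apply: eq_bigr => i _.
rewrite exchange_big /= -[m in (m * _)%N]card_ord -sum_nat_const.
apply: eq_bigr => j _; rewrite -(card_alone_at i j) -sum1_card [RHS]big_mkcond.
by apply: eq_bigr => f _; rewrite inE; case: (_ && _).
Qed.

End BallsInBins.

Lemma bounded_differences_nalone (R : realType) n m :
  bounded_differences 2 (fun f : {ffun 'I_n -> 'I_m} => (nalone f)%:R : R).
Proof.
move=> f g i fg; have gf k : k != i -> g k = f k by move=> /fg ->.
have := nalone_le_moved fg; have := nalone_le_moved gf.
rewrite -!(ler_nat R) !natrD ler_norml => ? ?; apply/andP; split; lra.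
Qed.

Lemma avg_nalone (R : realType) n m : (0 < n)%N -> (0 < m)%N ->
  avg (fun f : {ffun 'I_n -> 'I_m} => (nalone f)%:R : R)
    = n%:R * ((m%:R - 1) / m%:R) ^+ n.-1.
Proof.
move=> n0 m0; rewrite /avg -natr_sum sum_nalone // card_ffun !card_ord.
rewrite -{3}(prednK n0) expnS !natrM !natrX -subn1 natrB // expr_div_n.
by field; rewrite pnatr_eq0 -lt0n m0 expf_neq0 // pnatr_eq0 -lt0n.
Qed.

Lemma prob_X1_ge_lower_tail (R : realType) n m (F : {ffun 'I_n -> 'I_m} -> R) (t u : R) :
  (0 < m)%N -> (forall f, F f <= (X1 f)%:R) -> t <= u ->
  1 - #|[set f | F f <= u]|%:R / (m ^ n)%:R <= prob_X1_ge n m t.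
Proof.
move=> m0 FX1 tu; pose Good := [set f : {ffun 'I_n -> 'I_m} | t <= (X1 f)%:R].
have bad : ~: Good \subset [set f | F f <= u].
  apply/fintype.subsetP => f; rewrite !inE -ltNge => small.
  by have := FX1 f; lra.
have := cardsC Good; rewrite card_ffun !card_ord => /(congr1 (GRing.natmul (1 : R))).
rewrite natrD => split; have := subset_leq_card bad; rewrite -(ler_nat R) => le_bad.
rewrite /prob_X1_ge -/Good lerBlDl -mulrDl ler_pdivlMr ?ltr0n ?expn_gt0 ?m0 //.
by rewrite mul1r -split; lra.
Qed.

Section Bins.
Variables (R : realType) (beta n m : R).

Let bins_mul_ln : 16 <= n -> m = beta * n / ln n -> m * ln n = beta * n.
Proof. by move=> n16 ->; rewrite divfK // gt_eqF // (lt_le_trans _ (ln_ge2 n16)). Qed.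

Lemma bins_ge4 : 4 <= beta -> 16 <= n -> m = beta * n / ln n -> 4 <= m.
Proof.
move=> beta4 n16 /(bins_mul_ln n16) mL.
have := ln_ge2 n16; have := ln_sqr_lt (le_trans (ler1n R 16) n16); nra.
Qed.

Lemma le_bins_mul_pred : 4 <= beta -> 16 <= n -> m = beta * n / ln n -> n <= m * (m - 1).
Proof.
move=> beta4 n16 hm; have m4 := bins_ge4 beta4 n16 hm.
move: hm => /(bins_mul_ln n16) mL.
have L2 := ln_ge2 n16; have Ln := ln_sqr_lt (le_trans (ler1n R 16) n16).
have sq : 16 * n ^+ 2 <= m ^+ 2 * ln n ^+ 2.
  by rewrite -exprMn mL exprMn ler_wpM2r ?sqr_ge0 //; nra.
have m2 : 8 * n < m ^+ 2.
  have : 16 * n ^+ 2 < m ^+ 2 * (2 * n) by apply: le_lt_trans sq _; rewrite ltr_pM2l; nra.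
  nra.
nra.
Qed.

Lemma mean_nalone_ge k : 4 <= beta -> 16 <= n -> m = beta * n / ln n ->
  n = k.+1%:R -> n `^ (1 - beta^-1) / 4 <= n * ((m - 1) / m) ^+ k.
Proof.
move=> beta4 n16 hm nk.
have m4 := bins_ge4 beta4 n16 hm; have mm := le_bins_mul_pred beta4 n16 hm.
move: hm => /(bins_mul_ln n16) mL.
have n0 : 0 < n by lra.
have L0 : 0 < ln n by apply: lt_le_trans (ln_ge2 n16).
have exponent : - (ln n / beta) - 1 <= - (k.+1%:R / (m - 1)).
  have Lb : ln n / beta = n / m.
    have nE : n = m * ln n / beta by rewrite mL; field; rewrite gt_eqF //; lra.
    by rewrite {2}nE; field; rewrite !gt_eqF //; lra.
  rewrite -nk Lb (_ : n / (m - 1) = n / m + n / (m * (m - 1))); last first.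
    by field; rewrite !gt_eqF //; lra.
  by rewrite opprD lerD2l lerN2 ler_pdivrMr ?mul1r //; nra.
rewrite powR_1BV // -mulrA ler_wpM2l ?(ltW n0) //.
apply: le_trans (_ : expR (- (ln n / beta)) * expR (-1) <= _).
  by rewrite ler_wpM2l ?expR_ge0 // -div1r expRN1_ge.
have q01 : 0 <= (m - 1) / m <= 1 by rewrite divr_ge0 ?ler_pdivrMr /=; lra.
case/andP: q01 => q0 q1.
apply: le_trans (ler_wiXn2l q0 q1 (leqnSn k)); apply: le_trans (expR_le_pow_ratio k.+1 _); last lra.
by rewrite -expRD ler_expR.
Qed.

End Bins.

Lemma tail_exponent_le (R : realType) (beta c x : R) :
  4 <= beta -> 0 <= c -> 1 <= x -> (8192 * c) ^+ 4 <= x ->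
  expR (- ((x `^ (1 - beta^-1) / 8) ^+ 2 / (8 * x * 2 ^+ 2))) <= x `^ (- c).
Proof.
move=> beta4 c0 x1 xc; have x0 : 0 < x by lra.
have L0 : 0 <= ln x by exact: ln_ge0.
rewrite [x `^ (- c)]/powR gt_eqF // mulNr ler_expR lerN2 powR_1BV //.
set E := expR (- (ln x / beta)).
have half : expR (ln x / 2) <= x * E ^+ 2.
  have xE : x = expR (ln x) by rewrite lnK ?posrE.
  rewrite -expRM_natl [X in _ <= X * _]xE -expRD ler_expR.
  have : ln x / beta <= ln x / 4 by rewrite ler_wpM2l // lef_pV2 ?posrE //; lra.
  lra.
have := mul_le_expR_half (mulr_ge0 (ler0n R 8192) c0) (_ : _ <= expR (ln x)).
rewrite lnK ?posrE // => /(_ xc) root4.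
rewrite (_ : (x * E / 8) ^+ 2 / (8 * x * 2 ^+ 2) = x * E ^+ 2 / 2048); last first.
  by field; rewrite gt_eqF.
nra.
Qed.

Theorem lemma2p3 (R : realType) (beta c : R) (hbeta : 4 <= beta) (hc : 0 < c) :
  exists N : nat, forall n m : nat, (N <= n)%N ->
    m%:R = beta * n%:R / ln (n%:R : R) ->
    1 - (n%:R : R) `^ (- c) <=
      prob_X1_ge n m ((n%:R : R) `^ (1 - beta^-1) / (4 * ln (n%:R : R))).
Proof.
exists (maxn 16 (Num.truncn ((8192 * c) ^+ 4)).+1) => n m nN hm.
have n16 : 16 <= n%:R :> R by rewrite (ler_nat R 16) (leq_trans (leq_maxl _ _) nN).
have nc : (8192 * c) ^+ 4 <= n%:R :> R.
  apply/ltW/(lt_le_trans (truncnS_gt _)).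
  by rewrite ler_nat (leq_trans (leq_maxr _ _) nN).
have m4 := bins_ge4 hbeta n16 hm.
have n0 : (0 < n)%N by rewrite -(ltr_nat R); lra.
have m0 : (0 < m)%N by rewrite -(ltr_nat R); lra.
set P := n%:R `^ (1 - beta^-1).
pose F (f : {ffun 'I_n -> 'I_m}) : R := (nalone f)%:R.
have mean : P / 4 <= avg F by rewrite avg_nalone // mean_nalone_ge // prednK.
have P0 : 0 <= P := powR_ge0 _ _.
have Pn : P <= n%:R by rewrite ler1_powR ?gerDl ?oppr_le0 ?invr_ge0 //; lra.
have Im0 : (0 < #|'I_m|)%N by rewrite card_ord.
have s_range : 0 <= P / 8 <= 2 * n%:R * 2 by apply/andP; split; lra.
have := @card_lower_tail_le R _ Im0 n 2 (P / 8) F n0 (ltr0Sn R 1) s_range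
  (@bounded_differences_nalone R n m).
rewrite card_ffun !card_ord natrX => tail.
have := tail_exponent_le hbeta (ltW hc) (le_trans (ler1n R 16) n16) nc; rewrite -/P => expo.
apply: le_trans (prob_X1_ge_lower_tail (u := avg F - P / 8) m0 _ _) => [|f|].
- rewrite lerD2l lerN2 natrX ler_pdivrMr ?exprn_gt0 ?ltr0n //.
  by apply: le_trans tail _; rewrite [X in _ <= X]mulrC ler_wpM2l ?exprn_ge0.
- by rewrite ler_nat nalone_le_X1.
- have : P / (4 * ln n%:R) <= P / 8.
    by rewrite ler_wpM2l // lef_pV2 ?posrE; have := ln_ge2 n16; lra.
  lra.
Qed.
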